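(* Let $f \in \mathcal{S}^1_{\mu,L}(\mathbb{R}^d)$ with $0<\mu\le L$, let $x^\star$ be its unique minimizer, let $r\ge 2$, $0<s<1/L$, and $K := \max\left\{0, \frac{3r^2 - 4r - 12}{8}\right\}$. Let $\{x_k\},\{y_k\}$ be generated by NAG from $x_0=y_0\in\mathbb{R}^d$, and for integers $k\ge 1$ define \[ \mathcal{E}(k) := s(k+1)(k+r+1)\big(f(x_{k+1}) - f(x^\star)\big) + \frac12\Big\|(k-1)(x_k - x_{k-1}) + r(x_k - x^\star) - s(k+r)\nabla f(y_k)\Big\|^2 . \] Then for every integer $k\ge \max\{1,K\}$, \[ \mathcal{E}(k+1) - \mathcal{E}(k) \le -\mu s\cdot\frac{1 - Ls}{4}\cdot \mathcal{E}(k+1). \]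
   Context: $\mathcal{S}^1_{\mu,L}(\mathbb{R}^d)$ denotes the class of continuously differentiable convex functions $f:\mathbb{R}^d\to\mathbb{R}$ whose gradient is $L$-Lipschitz and which are $\mu$-strongly convex, $f(y)\ge f(x)+\langle\nabla f(x),y-x\rangle+\frac{\mu}{2}\|y-x\|^2$ for all $x,y$. NAG with step size $s$ and momentum parameter $r$ is the iteration, for $k \ge 0$: $x_{k+1} = y_k - s\nabla f(y_k)$, $\; y_{k+1} = x_{k+1} + \frac{k}{k+r+1}(x_{k+1} - x_k)$. *)

From HB Require Import structures.
From mathcomp Require Import all_boot all_order all_algebra.
From mathcomp Require Import all_classical all_reals all_analysis.
Set Implicit Arguments. Unset Strict Implicit. Unset Printing Implicit Defensive.
Import Order.TTheory GRing.Theory Num.Theory.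
Import numFieldNormedType.Exports.
Local Open Scope ring_scope.

Definition dotv {R : realType} {d : nat} (u v : 'rV[R]_d) : R :=
  \sum_(i < d) u ord0 i * v ord0 i.
Definition enorm {R : realType} {d : nat} (u : 'rV[R]_d) : R :=
  Num.sqrt (dotv u u).

Definition has_gradient {R : realType} {d : nat}
  (f : 'rV[R]_d -> R) (g : 'rV[R]_d -> 'rV[R]_d) : Prop :=
  forall x, differentiable f x /\ forall h, 'd f x h = dotv (g x) h.

Definition in_S1 {R : realType} {d : nat} (mu L : R)
  (f : 'rV[R]_d -> R) (g : 'rV[R]_d -> 'rV[R]_d) : Prop :=
  [/\ has_gradient f g,
      {in setT, continuous g},
      (forall x y, enorm (g x - g y) <= L * enorm (x - y))
    & (forall x y, f y >= f x + dotv (g x) (y - x) + mu / 2 * enorm (y - x) ^+ 2)].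

Fixpoint nag {R : realType} {d : nat} (g : 'rV[R]_d -> 'rV[R]_d) (s r : R)
  (x0 : 'rV[R]_d) (k : nat) : 'rV[R]_d * 'rV[R]_d :=
  match k with
  | 0%N => (x0, x0)
  | k'.+1 =>
      let p := nag g s r x0 k' in
      let xk := p.1 in let yk := p.2 in
      let xk1 := yk - s *: g yk in
      (xk1, xk1 + (k'%:R / (k'%:R + r + 1)) *: (xk1 - xk))
  end.

Definition nag_x {R : realType} {d : nat} g (s r : R) (x0 : 'rV[R]_d) k :=
  (nag g s r x0 k).1.
Definition nag_y {R : realType} {d : nat} g (s r : R) (x0 : 'rV[R]_d) k :=
  (nag g s r x0 k).2.

(* Lyapunov function E(k) (meaningful for k >= 1). *)
Definition nag_energy {R : realType} {d : nat} (f : 'rV[R]_d -> R) g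
  (s r : R) (x0 xstar : 'rV[R]_d) (k : nat) : R :=
  let x := nag_x g s r x0 in
  let y := nag_y g s r x0 in
  s * (k%:R + 1) * (k%:R + r + 1) * (f (x k.+1) - f xstar)
  + 1 / 2 * enorm ((k%:R - 1) *: (x k - x k.-1) + r *: (x k - xstar)
                    - (s * (k%:R + r)) *: g (y k)) ^+ 2.

(* At y = y_{k+1} the NAG iterates are encoded by the momentum vector
   w_k = k (x_{k+1} - x_k) + r (x_{k+1} - xstar) = (k + 1) (y - x_{k+1}) + r (y - xstar),
   which satisfies w_{k+1} = w_k - s (k + r + 1) grad f(y), so that
   E(k) = s (k + 1) (k + r + 1) (f(x_{k+1}) - f(xstar)) + |w_k|^2 / 2.
   The difference E(k+1) - E(k) is then bounded using only quantities at y: the descent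
   lemma for the gradient step x_{k+2} = y - s grad f(y), strong convexity between y
   and x_{k+1} resp. xstar, and the Polyak-Lojasiewicz inequality; E(k+1) itself is bounded
   by |u + v + w|^2 <= 3 (|u|^2 + |v|^2 + |w|^2). *)

From HB Require Import structures.
From mathcomp Require Import all_boot all_order all_algebra.
From mathcomp Require Import all_classical all_reals all_analysis.
From mathcomp Require Import ring lra.
Import Order.TTheory GRing.Theory Num.Theory.
Local Open Scope ring_scope.

Section InnerProduct.
Context {R : realType} {d : nat}.
Implicit Types (u v w : 'rV[R]_d) (a : R).

Lemma dotvC u v : dotv u v = dotv v u.
Proof. by apply: eq_bigr => i _; rewrite mulrC. Qed.

Lemma dotvDl u v w : dotv (u + v) w = dotv u w + dotv v w.
Proof. by rewrite /dotv -big_split; apply: eq_bigr => i _; rewrite !mxE mulrDl. Qed.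

Lemma dotvZl a u v : dotv (a *: u) v = a * dotv u v.
Proof. by rewrite /dotv mulr_sumr; apply: eq_bigr => i _; rewrite !mxE mulrA. Qed.

Lemma dotvNl u v : dotv (- u) v = - dotv u v.
Proof. by rewrite -scaleN1r dotvZl mulN1r. Qed.

Lemma dotvBl u v w : dotv (u - v) w = dotv u w - dotv v w.
Proof. by rewrite dotvDl dotvNl. Qed.

Lemma dotvDr u v w : dotv w (u + v) = dotv w u + dotv w v.
Proof. by rewrite dotvC dotvDl !(dotvC w). Qed.

Lemma dotvZr a u v : dotv v (a *: u) = a * dotv v u.
Proof. by rewrite dotvC dotvZl dotvC. Qed.

Lemma dotvNr u v : dotv v (- u) = - dotv v u.
Proof. by rewrite dotvC dotvNl dotvC. Qed.

Lemma dotvBr u v w : dotv w (u - v) = dotv w u - dotv w v.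
Proof. by rewrite dotvDr dotvNr. Qed.

Definition dotvE := (dotvDl, dotvDr, dotvBl, dotvBr, dotvZl, dotvZr, dotvNl, dotvNr).

Lemma dotvv_ge0 u : 0 <= dotv u u.
Proof. by apply: sumr_ge0 => i _; rewrite -expr2 sqr_ge0. Qed.

Lemma enorm_sqr u : enorm u ^+ 2 = dotv u u.
Proof. by rewrite sqr_sqrtr // dotvv_ge0. Qed.

Lemma dotv_le_of_sqr u v (l : R) : 0 < l ->
  dotv u u <= l ^+ 2 * dotv v v -> dotv u v <= l * dotv v v.
Proof.
move=> l_gt0 uv_le; have := dotvv_ge0 (u - l *: v); rewrite !dotvE (dotvC v u) => sqr_ge0.
by rewrite -(ler_pM2l (_ : 0 < 2 * l)); nra.
Qed.

Lemma dotv_add3_le u v w :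
  dotv (u + v + w) (u + v + w) <= 3 * (dotv u u + dotv v v + dotv w w).
Proof.
have := dotvv_ge0 (u - v); have := dotvv_ge0 (v - w); have := dotvv_ge0 (u - w).
by rewrite !dotvE (dotvC v u) (dotvC w u) (dotvC w v); lra.
Qed.

End InnerProduct.

Section Descent.
Context {R : realType} {d : nat} {f : 'rV[R]_d -> R} {g : 'rV[R]_d -> 'rV[R]_d} {L : R}.
Hypothesis L_gt0 : 0 < L.
Hypothesis grad_le : forall x y, f x + dotv (g x) (y - x) <= f y.
Hypothesis lipschitz : forall x y,
  dotv (g x - g y) (g x - g y) <= L ^+ 2 * dotv (x - y) (x - y).

(* A discrete substitute for integrating the gradient along [h]: apply [grad_le] at the
   end point of each of [m] steps of length [e]. *)
Lemma descent_steps x h e (m : nat) : 0 < e ->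
  f (x + (m%:R * e) *: h) - f x
    <= m%:R * e * dotv (g x) h + L * dotv h h * e ^+ 2 * (m%:R * (m%:R + 1) / 2).
Proof.
move=> e_gt0; elim: m => [|m IHm].
  by rewrite mul0r scale0r addr0 subrr !mul0r mulr0 addr0.
set z := x + _ *: h in IHm; set z' := x + _ *: h.
have zz' : z - z' = (- e) *: h by apply/rowP => j; rewrite !mxE -natr1; ring.
have z'x : z' - x = (m.+1%:R * e) *: h by apply/rowP => j; rewrite !mxE; ring.
have step_le : f z' - f z <= e * dotv (g z') h.
  by have := grad_le z' z; rewrite zz' dotvZr; lra.
have lip_le : dotv (g z' - g x) h <= L * (m.+1%:R * e) * dotv h h.
  apply: dotv_le_of_sqr; first by rewrite !mulr_gt0 ?ltr0n.
  by have := lipschitz z' x; rewrite z'x dotvZl dotvZr; nra.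
have lip_le' := ler_wpM2l (ltW e_gt0) lip_le.
rewrite dotvBl in lip_le'; rewrite -[m.+1%:R]natr1 in lip_le' *; lra.
Qed.

Lemma descent_lemma x h : f (x + h) <= f x + dotv (g x) h + L / 2 * dotv h h.
Proof.
apply/ler_addgt0Pr => eps eps_gt0.
set C := L * dotv h h.
have C_ge0 : 0 <= C by rewrite mulr_ge0 ?dotvv_ge0 // ltW.
have bound_ge0 : 0 <= C / (2 * eps) by rewrite divr_ge0 // mulr_ge0 // ltW.
set n := (Num.Def.archi_bound (C / (2 * eps))).+1.
have n_gt0 : 0 < n%:R :> R by rewrite ltr0n.
have n_large : C / (2 * n%:R) <= eps.
  have bound_lt : C / (2 * eps) < n%:R.
    by apply: lt_trans (archi_boundP bound_ge0) _; rewrite ltr_nat.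
  rewrite ler_pdivrMr ?mulr_gt0 //.
  by move: bound_lt; rewrite ltr_pdivrMr ?mulr_gt0 //; nra.
have step_gt0 : 0 < 1 / n%:R :> R by rewrite divr_gt0.
have := descent_steps x h _ n step_gt0.
rewrite mulrC -mulrA mul1r mulVf ?gt_eqF // scale1r !mul1r.
have -> : C * (n%:R^-1 ^+ 2 * (n%:R * (n%:R + 1) / 2)) = C / 2 + C / (2 * n%:R).
  by field; rewrite gt_eqF.
rewrite /C in n_large *; lra.
Qed.

End Descent.

Section StronglyConvexSmooth.
Context {R : realType} {d : nat} {mu L : R} {f : 'rV[R]_d -> R} {g : 'rV[R]_d -> 'rV[R]_d}.
Hypotheses (mu_gt0 : 0 < mu) (mu_le_L : mu <= L) (fS1 : in_S1 mu L f g).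

Lemma S1_strong_convexity x y :
  f x + dotv (g x) (y - x) + mu / 2 * dotv (y - x) (y - x) <= f y.
Proof. by case: fS1 => _ _ _ /(_ x y); rewrite enorm_sqr. Qed.

Lemma S1_grad_le x y : f x + dotv (g x) (y - x) <= f y.
Proof.
have := S1_strong_convexity x y.
have : 0 <= mu / 2 * dotv (y - x) (y - x) by rewrite mulr_ge0 ?dotvv_ge0 ?divr_ge0 ?ltW.
lra.
Qed.

Lemma S1_lipschitz_sqr x y :
  dotv (g x - g y) (g x - g y) <= L ^+ 2 * dotv (x - y) (x - y).
Proof.
case: fS1 => _ _ /(_ x y) lip _; rewrite -!enorm_sqr -exprMn.
by rewrite lerXn2r ?nnegrE ?sqrtr_ge0 // mulr_ge0 ?sqrtr_ge0 // ltW // (lt_le_trans mu_gt0).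
Qed.

(* Complete the square in the strong convexity bound at [y]. *)
Lemma S1_polyak_lojasiewicz y z : 2 * mu * (f y - f z) <= dotv (g y) (g y).
Proof.
have := S1_strong_convexity y z; have := dotvv_ge0 (g y + mu *: (z - y)).
rewrite !dotvE (dotvC z (g y)) (dotvC y (g y)) (dotvC y z) => sqr_ge0 sc.
have := ler_wpM2l (ltW mu_gt0) sc; lra.
Qed.

Lemma gradient_step_le s y :
  f (y - s *: g y) <= f y - s * (1 - L * s / 2) * dotv (g y) (g y).
Proof.
have := descent_lemma (lt_le_trans mu_gt0 mu_le_L) S1_grad_le S1_lipschitz_sqr y (- s *: g y).
by rewrite scaleNr !dotvE; lra.
Qed.

End StronglyConvexSmooth.

Lemma mul_sqr_weight_le {R : realType} {a T N c X : R} :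
  0 <= a -> T <= 1 -> 0 <= c -> c <= N -> 0 <= X ->
  a * (T / 4) * (3 / 2 * (c ^+ 2 * X)) <= a * N / 2 * (c * X).
Proof.
move=> a_ge0 T_le1 c_ge0 c_le_N X_ge0.
have : 3 * (T * c) <= 4 * N by have := ler_wpM2r c_ge0 T_le1; lra.
have acX_ge0 : 0 <= a * c * X / 8 by rewrite divr_ge0 ?mulr_ge0.
by move/(ler_wpM2l acX_ge0); rewrite expr2; lra.
Qed.

(* With M = mu s (1 - L s) / 4 and N = k + r + 1: the [F] terms are controlled since
   (k + 2)(k + r + 2) <= N^2 (this needs r >= 2), the [P] and [Q] terms since
   3 (1 - L s) c / 8 <= N / 2 for c = k + 1, r, and the [Gn] terms add up to
   (3/8)(1 - L s)(mu s - 1)(s N)^2 Gn <= 0. *)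
Lemma energy_step_arith {R : realType} {k r s mu L F Fy P Q Gn D E : R} :
  0 < mu -> mu <= L -> 2 <= r -> 0 < s -> L * s < 1 -> 0 <= k ->
  0 <= F -> 0 <= P -> 0 <= Q -> 0 <= Gn ->
  F <= Fy - s * (1 - L * s / 2) * Gn -> 2 * mu * Fy <= Gn ->
  D <= s * (k + 2) * (k + r + 2) * F - s * (k + r + 1) ^+ 2 * Fy
       - mu * s * (k + r + 1) / 2 * ((k + 1) * P + r * Q)
       + (s * (k + r + 1)) ^+ 2 / 2 * Gn ->
  E <= s * (k + 2) * (k + r + 2) * F
       + 3 / 2 * ((k + 1) ^+ 2 * P + r ^+ 2 * Q + (s * (k + r + 1)) ^+ 2 * Gn) ->
  D <= - (mu * s) * ((1 - L * s) / 4) * E.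
Proof.
move=> mu_gt0 mu_le_L r_ge2 s_gt0 Ls_lt1 k_ge0 F_ge0 P_ge0 Q_ge0 Gn_ge0 descent subopt D_le E_le.
set N := k + r + 1 in D_le E_le; set T := 1 - L * s.
have [mu_ge0 s_ge0] := (ltW mu_gt0, ltW s_gt0).
have N_gt0 : 0 < N by rewrite /N; lra.
have T_gt0 : 0 < T by rewrite /T; lra.
have T_le1 : T <= 1 by rewrite /T lerBlDr lerDl mulr_ge0 // ltW // (lt_le_trans mu_gt0).
have mus_le1 : mu * s <= 1 by have := ler_wpM2r s_ge0 mu_le_L; lra.
have M_ge0 : 0 <= mu * s * (T / 4) by rewrite mulr_ge0 ?mulr_ge0 ?divr_ge0 ?(ltW T_gt0).
have sizes : (k + 2) * (k + r + 2) <= N ^+ 2.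
  have : 0 <= k * (r - 2) by rewrite mulr_ge0 // subr_ge0.
  rewrite /N; nra.
have F_part : s * (k + 2) * (k + r + 2) * F - s * N ^+ 2 * Fy
    <= - s * N ^+ 2 * (s * (1 - L * s / 2) * Gn).
  have := ler_wpM2l (mulr_ge0 s_ge0 (sqr_ge0 N)) descent.
  have := ler_wpM2r F_ge0 (ler_wpM2l s_ge0 sizes).
  rewrite !mulrA; lra.
have MF_part : mu * s * (T / 4) * (s * (k + 2) * (k + r + 2) * F) <= s ^+ 2 * T * N ^+ 2 / 8 * Gn.
  have : (k + 2) * (k + r + 2) * (2 * mu * F) <= N ^+ 2 * Gn.
    apply: ler_pM => //; first by rewrite mulr_ge0 //; lra.
      by rewrite !mulr_ge0.
    apply: le_trans subopt; rewrite ler_pM2l ?mulr_gt0 //.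
    have : 0 <= s * (1 - L * s / 2) * Gn by rewrite !mulr_ge0 //; lra.
    lra.
  have c_ge0 : 0 <= s ^+ 2 * T / 8 by rewrite divr_ge0 ?mulr_ge0 ?sqr_ge0 ?ltW.
  by move/(ler_wpM2l c_ge0); lra.
have mus_ge0 : 0 <= mu * s by rewrite mulr_ge0.
have [k1_ge0 r_ge0] : 0 <= k + 1 /\ 0 <= r by split; lra.
have [k1_le_N r_le_N] : k + 1 <= N /\ r <= N by rewrite /N; split; lra.
have P_part := mul_sqr_weight_le mus_ge0 T_le1 k1_ge0 k1_le_N P_ge0.
have Q_part := mul_sqr_weight_le mus_ge0 T_le1 r_ge0 r_le_N Q_ge0.
have G_part : mu * s * (T / 4) * (3 / 2 * ((s * N) ^+ 2 * Gn)) <= 3 / 8 * T * (s * N) ^+ 2 * Gn.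
  have c_ge0 : 0 <= T * (s * N) ^+ 2 * Gn by rewrite !mulr_ge0 ?(ltW T_gt0) ?(ltW N_gt0).
  by have := ler_wpM2r c_ge0 mus_le1; lra.
have := ler_wpM2l M_ge0 E_le.
rewrite /T in MF_part G_part P_part Q_part *; lra.
Qed.

Section Energy.
Context {R : realType} {d : nat}.
Variables (f : 'rV[R]_d -> R) (g : 'rV[R]_d -> 'rV[R]_d).
Variables (mu L r s : R) (xstar : 'rV[R]_d).
Hypotheses (fS1 : in_S1 mu L f g) (xstar_min : forall x, f xstar <= f x).

Definition energy (k : R) (x v : 'rV[R]_d) : R :=
  s * (k + 1) * (k + r + 1) * (f x - f xstar) + 1 / 2 * dotv v v.

Lemma energy_decrease (k : R) (x y w : 'rV[R]_d) :
  0 < mu -> 0 < s -> 0 <= r -> 0 <= k ->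
  w = (k + 1) *: (y - x) + r *: (y - xstar) ->
  energy (k + 1) (y - s *: g y) (w - (s * (k + r + 1)) *: g y) - energy k x w
    <= s * (k + 2) * (k + r + 2) * (f (y - s *: g y) - f xstar)
       - s * (k + r + 1) ^+ 2 * (f y - f xstar)
       - mu * s * (k + r + 1) / 2 * ((k + 1) * dotv (y - x) (y - x)
                                     + r * dotv (y - xstar) (y - xstar))
       + (s * (k + r + 1)) ^+ 2 / 2 * dotv (g y) (g y).
Proof.
move=> mu_gt0 s_gt0 r_ge0 k_ge0 w_def.
set N := k + r + 1; set G := g y; set a := y - x; set b := y - xstar.
have dot_a : f y - f x + mu / 2 * dotv a a <= dotv a G.
  have := S1_strong_convexity fS1 y x.
  by rewrite -(opprB y x) dotvNr dotvNl dotvNr opprK -/a -/G (dotvC G); lra.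
have dot_b : f y - f xstar + mu / 2 * dotv b b <= dotv b G.
  have := S1_strong_convexity fS1 y xstar.
  by rewrite -(opprB y xstar) dotvNr dotvNl dotvNr opprK -/b -/G (dotvC G); lra.
have sN_ge0 : 0 <= s * N by rewrite mulr_ge0 ?ltW // /N; lra.
have k1_ge0 : 0 <= k + 1 by lra.
have sa := ler_wpM2l (mulr_ge0 sN_ge0 k1_ge0) dot_a.
have sb := ler_wpM2l (mulr_ge0 sN_ge0 r_ge0) dot_b.
have wG : dotv w G = (k + 1) * dotv a G + r * dotv b G by rewrite w_def dotvDl !dotvZl.
have normE : dotv (w - (s * N) *: G) (w - (s * N) *: G)
    = dotv w w - 2 * (s * N) * dotv w G + (s * N) ^+ 2 * dotv G G.
  by rewrite !dotvE (dotvC G w); ring.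
rewrite /energy normE wG /N in sa sb *; lra.
Qed.

Lemma energy_le (k : R) (x y w : 'rV[R]_d) :
  w = (k + 1) *: (y - x) + r *: (y - xstar) ->
  energy (k + 1) (y - s *: g y) (w - (s * (k + r + 1)) *: g y)
    <= s * (k + 2) * (k + r + 2) * (f (y - s *: g y) - f xstar)
       + 3 / 2 * ((k + 1) ^+ 2 * dotv (y - x) (y - x) + r ^+ 2 * dotv (y - xstar) (y - xstar)
                  + (s * (k + r + 1)) ^+ 2 * dotv (g y) (g y)).
Proof.
move=> w_def; set N := k + r + 1.
have := dotv_add3_le ((k + 1) *: (y - x)) (r *: (y - xstar)) (- (s * N) *: g y).
rewrite -w_def scaleNr dotvNl dotvNr opprK !dotvZl !dotvZr /energy /N; lra.
Qed.

Lemma energy_step (k : R) (x y w : 'rV[R]_d) :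
  0 < mu -> mu <= L -> 2 <= r -> 0 < s -> L * s < 1 -> 0 <= k ->
  w = (k + 1) *: (y - x) + r *: (y - xstar) ->
  energy (k + 1) (y - s *: g y) (w - (s * (k + r + 1)) *: g y) - energy k x w
    <= - (mu * s) * ((1 - L * s) / 4)
         * energy (k + 1) (y - s *: g y) (w - (s * (k + r + 1)) *: g y).
Proof.
move=> mu_gt0 mu_le_L r_ge2 s_gt0 Ls_lt1 k_ge0 w_def.
have r_ge0 : 0 <= r by lra.
have F_ge0 : 0 <= f (y - s *: g y) - f xstar by rewrite subr_ge0.
have descent : f (y - s *: g y) - f xstar
    <= f y - f xstar - s * (1 - L * s / 2) * dotv (g y) (g y).
  by have := gradient_step_le mu_gt0 mu_le_L fS1 s y; lra.
exact: (energy_step_arith mu_gt0 mu_le_L r_ge2 s_gt0 Ls_lt1 k_ge0 F_ge0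
          (dotvv_ge0 _) (dotvv_ge0 _) (dotvv_ge0 _) descent
          (S1_polyak_lojasiewicz mu_gt0 fS1 y xstar)
          (energy_decrease k x y w mu_gt0 s_gt0 r_ge0 k_ge0 w_def) (energy_le k x y w w_def)).
Qed.

End Energy.

Section NAG.
Context {R : realType} {d : nat}.
Variables (g : 'rV[R]_d -> 'rV[R]_d) (s r : R) (x0 xstar : 'rV[R]_d).
Hypothesis r_ge0 : 0 <= r.

Local Notation x := (nag_x g s r x0).
Local Notation y := (nag_y g s r x0).

Lemma nag_xS k : x k.+1 = y k - s *: g (y k).
Proof. by []. Qed.

Lemma nag_yS k : y k.+1 = x k.+1 + (k%:R / (k%:R + r + 1)) *: (x k.+1 - x k).
Proof. by []. Qed.

Definition nag_momentum (k : nat) : 'rV[R]_d :=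
  k%:R *: (x k.+1 - x k) + r *: (x k.+1 - xstar).

Lemma nag_momentumE k :
  nag_momentum k = (k%:R + 1) *: (y k.+1 - x k.+1) + r *: (y k.+1 - xstar).
Proof.
have kr_neq0 : k%:R + r + 1 != 0 by rewrite gt_eqF // ltr_wpDl // addr_ge0.
by rewrite /nag_momentum nag_yS; apply/rowP => j; rewrite !mxE; field.
Qed.

Lemma nag_momentumS k :
  nag_momentum k.+1 = nag_momentum k - (s * (k%:R + r + 1)) *: g (y k.+1).
Proof.
rewrite (nag_momentumE k) /nag_momentum (nag_xS k.+1).
by apply/rowP => j; rewrite !mxE -natr1; ring.
Qed.

Lemma nag_energyE (f : 'rV[R]_d -> R) k :
  nag_energy f g s r x0 xstar k = energy f r s xstar k%:R (x k.+1) (nag_momentum k).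
Proof.
suff <- : (k%:R - 1) *: (x k - x k.-1) + r *: (x k - xstar) - (s * (k%:R + r)) *: g (y k)
          = nag_momentum k by rewrite /nag_energy /energy enorm_sqr.
case: k => [|k].
  by rewrite /nag_momentum (nag_xS 0); apply/rowP => j; rewrite !mxE; ring.
by rewrite nag_momentumS -natr1 /nag_momentum addrK (addrAC _ 1).
Qed.

End NAG.

Theorem mainTheorem5 (R : realType) (d : nat) (mu L : R)
  (f : 'rV[R]_d -> R) (g : 'rV[R]_d -> 'rV[R]_d) (xstar x0 : 'rV[R]_d) (r s : R) :
  0 < mu -> mu <= L -> in_S1 mu L f g ->
  (forall x, f xstar <= f x) ->
  2 <= r -> 0 < s -> s < 1 / L ->
  forall k : nat, (1 <= k)%N ->
    Num.max 0 ((3 * r ^+ 2 - 4 * r - 12) / 8) <= k%:R ->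
    nag_energy f g s r x0 xstar k.+1 - nag_energy f g s r x0 xstar k
      <= - (mu * s) * ((1 - L * s) / 4) * nag_energy f g s r x0 xstar k.+1.
Proof.
(* The estimate holds for every k. *)
move=> mu_gt0 mu_le_L fS1 xstar_min r_ge2 s_gt0 s_lt k _ _.
have Ls_lt1 : L * s < 1 by rewrite mulrC -ltr_pdivlMr // (lt_le_trans mu_gt0).
have r_ge0 : 0 <= r by lra.
rewrite !nag_energyE // nag_momentumS // nag_xS -natr1.
by apply: energy_step => //; exact: nag_momentumE.
Qed.
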